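(* Let $P$ be a graded poset and let $\sim$ be an equivalence relation on $P$ such that $x\sim y$ implies $\rho(x)=\rho(y)$. On the set $P/\sim$ of equivalence classes define $X\le Y$ iff there exist $x\in X$, $y\in Y$ and $z_1,\dots,z_k\in P$ such that $x\le z_1\sim z_2\le z_3\sim\cdots\le z_{k-1}\sim z_k\le y$. Then: (1) $P/\sim$ with $\le$ is a poset; (2) for $X,Y\in P/\sim$, $X\lessdot Y$ if and only if $x\lessdot y$ for some $x\in X$ and $y\in Y$; (3) $P/\sim$ is graded, and for $X\in P/\sim$ we have $\rho(X)=\rho(x)$ for all $x\in X$.
   Context: $P$ is a finite graded poset with rank function $\rho$. *)

From HB Require Import structures.
From mathcomp Require Import all_boot all_order.
Set Implicit Arguments. Unset Strict Implicit. Unset Printing Implicit Defensive.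
Import Order.TTheory.
Local Open Scope order_scope.

Definition is_poset_on (A : Type) (D : A -> Prop) (le : A -> A -> Prop) :=
  [/\ (forall x, D x -> le x x),
      (forall x y, D x -> D y -> le x y -> le y x -> x = y) &
      (forall x y z, D x -> D y -> D z -> le x y -> le y z -> le x z)].

Definition covers (A : Type) (D : A -> Prop) (le : A -> A -> Prop) (x y : A) :=
  [/\ le x y, x <> y &
      ~ (exists z, [/\ D z, le x z, z <> x, le z y & z <> y])].

Definition graded_by (A : Type) (D : A -> Prop) (le : A -> A -> Prop)
  (rk : A -> nat) :=
  (forall x, D x -> (forall y, D y -> le y x -> y = x) -> rk x = 0%N) /\
  (forall x y, D x -> D y -> covers D le x y -> rk y = (rk x).+1).

(* Zigzag x <= a1 ~ b1 <= a2 ~ b2 <= ... <= ak ~ bk <= y, encoded by the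
   list of pairs [(a1,b1); ...; (ak,bk)] (possibly empty: then x <= y). *)
Fixpoint zigzag (d : Order.disp_t) (T : porderType d) (r : rel T)
  (x : T) (s : seq (T * T)) (y : T) : bool :=
  match s with
  | [::] => x <= y
  | (a, b) :: s' => [&& x <= a, r a b & zigzag r b s' y]
  end.

Definition qclasses (d : Order.disp_t) (T : finPOrderType d) (r : rel T)
  : {set {set T}} := [set [set y | r x y] | x : T].

Definition qle (d : Order.disp_t) (T : finPOrderType d) (r : rel T)
  (X Y : {set T}) : Prop :=
  exists x y s, [/\ x \in X, y \in Y & zigzag r x s y].

From HB Require Import structures.
From mathcomp Require Import all_boot all_order.
Set Implicit Arguments. Unset Strict Implicit. Unset Printing Implicit Defensive.
Import Order.TTheory.
Local Open Scope order_scope.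

(* In a finite graded poset the rank strictly increases along [<],
   so a zigzag [x <= z1 ~ z2 <= ... <= y] never lowers the rank, and when it
   preserves the rank every [<=] step is an equality, whence [x ~ y].  This
   gives antisymmetry of the quotient order, and shows that a class [X] lies
   strictly below [Y] only if some step of a zigzag from [X] to [Y] raises the
   rank; refining that step to a cover [u <. c] produces the intermediate
   class of [c], which must be [Y] when [X <. Y]. *)

Section FinPOrder.
Variables (d : Order.disp_t) (P : finPOrderType d).
Implicit Types x y z : P.

Local Notation pcovers := (covers (fun _ : P => True) (fun a b : P => a <= b)).

Lemma coversP x y : pcovers x y <-> x < y /\ (forall z, x < z -> z < y -> False).
Proof.
split=> [[xy xNy noz] | [xy noz]].
  split=> [|z xz zy]; first by rewrite lt_def xy andbT eq_sym; apply/eqP.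
  apply: noz; exists z; split=> //; [exact: ltW | | exact: ltW |].
    by move=> zx; rewrite zx ltxx in xz.
  by move=> zy'; rewrite zy' ltxx in zy.
rewrite /covers; split=> [|xy'|[z [_ xz zNx zy zNy]]]; first exact: ltW.
  by rewrite xy' ltxx in xy.
by apply: (noz z); rewrite lt_def ?xz ?zy andbT; [exact/eqP | exact/eqP/nesym].
Qed.

Lemma covers_lt x y : pcovers x y -> x < y.
Proof. by case/coversP. Qed.

Lemma card_upset_lt x y :
  x < y -> (#|[set w | (y < w)%O]| < #|[set w | (x < w)%O]|)%N.
Proof.
move=> xy; apply: proper_card; apply/properP; split.
  by apply/subsetP => w; rewrite !inE; apply: lt_trans.
by exists y; rewrite !inE ?xy ?ltxx.
Qed.

(* A cover of [x] below [y]: among the elements of [(x, y]], one with the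
   largest strict upper set is minimal. *)
Lemma exists_cover x y : x < y -> exists2 c, pcovers x c & c <= y.
Proof.
move=> xy.
pose between z := (x < z) && (z <= y).
have between_y : between y by rewrite /between xy lexx.
case: (arg_maxnP (fun z => #|[set w | z < w]|) between_y) => c /andP[xc cy] cmax.
exists c => //; apply/coversP; split=> // z xz zc.
have /cmax : between z by rewrite /between xz (le_trans (ltW zc) cy).
by rewrite /= leqNgt card_upset_lt.
Qed.

Lemma zigzag_cat (r : rel P) s t x y a b z :
  zigzag r x s y -> y <= a -> r a b -> zigzag r b t z ->
  zigzag r x (s ++ (a, b) :: t) z.
Proof.
elim: s x => [|[a' b'] s IHs] x /=; first by move=> xy ya -> ->; rewrite (le_trans xy ya).
by case/and3P=> -> -> zz ya ab zz'; rewrite (IHs _ zz ya ab zz').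
Qed.

Section Graded.
Variable rho : P -> nat.
Hypothesis rho_graded : graded_by (fun _ => True) (fun x y : P => x <= y) rho.

Lemma covers_rank x y : pcovers x y -> rho y = (rho x).+1.
Proof. exact: rho_graded.2. Qed.

Lemma rank_lt x y : x < y -> (rho x < rho y)%N.
Proof.
have [n] := ubnP #|[set w | x < w]|; elim: n x => // n IHn x upx xy.
have [c xc cy] := exists_cover xy.
rewrite -ltnS -(covers_rank xc).
have [-> //|cNy] := eqVneq c y.
have c_lt_y : c < y by rewrite lt_def cy andbT eq_sym.
apply: ltnW (IHn _ _ c_lt_y).
exact: leq_trans (card_upset_lt (covers_lt xc)) upx.
Qed.

Lemma rank_le x y : x <= y -> (rho x <= rho y)%N.
Proof. by rewrite le_eqVlt => /predU1P[-> // | /rank_lt/ltnW]. Qed.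

Lemma rank_le_inj x y : x <= y -> rho x = rho y -> x = y.
Proof.
rewrite le_eqVlt => /predU1P[// | /rank_lt xy eq_rk].
by rewrite eq_rk ltnn in xy.
Qed.

Lemma le_rank_lt x y : x <= y -> (rho x < rho y)%N -> x < y.
Proof. by move=> xy; rewrite lt_def xy andbT; apply: contraTneq => ->; rewrite ltnn. Qed.

Section Quotient.
Variable r : rel P.
Hypotheses (r_refl : reflexive r) (r_sym : symmetric r) (r_trans : transitive r).
Hypothesis r_rank : forall x y, r x y -> rho x = rho y.

Local Notation Q := (qclasses r).
Local Notation cls x := [set y | r x y].
Implicit Types X Y Z : {set P}.

Lemma zigzag_rank_le s x y : zigzag r x s y -> (rho x <= rho y)%N.
Proof.
elim: s x => [|[a b] s IHs] x /=; first exact: rank_le.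
case/and3P=> xa ab zz; rewrite (leq_trans (rank_le xa)) // (r_rank ab).
exact: IHs.
Qed.

Lemma zigzag_rank_eq s x y : zigzag r x s y -> rho x = rho y -> r x y.
Proof.
elim: s x => [|[a b] s IHs] x /=; first by move=> xy /(rank_le_inj xy) ->.
case/and3P=> xa ab zz eq_xy.
have eq_xa : rho x = rho a.
  apply/eqP; rewrite eqn_leq rank_le // eq_xy (r_rank ab).
  exact: zigzag_rank_le zz.
move: ab; rewrite -(rank_le_inj xa eq_xa) => xb.
have eq_by : rho b = rho y by rewrite -(r_rank xb).
exact: r_trans xb (IHs _ zz eq_by).
Qed.

(* The first step of the zigzag that raises the rank is refined to a cover. *)
Lemma zigzag_rank_lt s x y : zigzag r x s y -> (rho x < rho y)%N ->
  exists u c t, [/\ r x u, pcovers u c & zigzag r c t y].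
Proof.
elim: s x => [|[a b] s IHs] x /= => [xy | /and3P[xa ab zz]] lt_xy.
  have [c xc cy] := exists_cover (le_rank_lt xy lt_xy).
  by exists x, c, [::].
have [lt_xa | ge_xa] := ltnP (rho x) (rho a).
  have [c xc ca] := exists_cover (le_rank_lt xa lt_xa).
  by exists x, c, ((a, b) :: s); split=> //=; rewrite ca ab.
have eq_xa : rho x = rho a by apply/eqP; rewrite eqn_leq ge_xa rank_le.
move: ab; rewrite -(rank_le_inj xa eq_xa) => xb.
have [|u [c [t [bu uc zz']]]] := IHs b zz; first by rewrite -(r_rank xb).
by exists u, c, t; split=> //; apply: r_trans bu.
Qed.

Lemma cls_in_qclasses x : cls x \in Q.
Proof. exact: imset_f. Qed.

Lemma mem_cls x : x \in cls x.
Proof. by rewrite inE. Qed.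

Lemma qclass_eq X x : X \in Q -> x \in X -> X = cls x.
Proof.
case/imsetP=> x0 _ ->; rewrite inE => x0x; apply/setP => z; rewrite !inE.
by apply/idP/idP; apply: r_trans; rewrite // r_sym.
Qed.

Lemma qclass_n0 X : X \in Q -> exists x, x \in X.
Proof. by case/imsetP=> x _ ->; exists x; apply: mem_cls. Qed.

Lemma qclass_rank X x y : X \in Q -> x \in X -> y \in X -> rho x = rho y.
Proof. by move=> XQ xX; rewrite (qclass_eq XQ xX) inE; apply: r_rank. Qed.

Lemma qle_rank X Y x y : X \in Q -> Y \in Q -> qle r X Y ->
  x \in X -> y \in Y -> (rho x <= rho y)%N.
Proof.
move=> XQ YQ [x' [y' [s [x'X y'Y zz]]]] xX yY.
by rewrite (qclass_rank XQ xX x'X) (qclass_rank YQ yY y'Y) (zigzag_rank_le zz).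
Qed.

Lemma qle_rank_eq X Y x y : X \in Q -> Y \in Q -> qle r X Y ->
  x \in X -> y \in Y -> rho x = rho y -> X = Y.
Proof.
move=> XQ YQ [x' [y' [s [x'X y'Y zz]]]] xX yY eq_xy.
have eq_x'y' : rho x' = rho y'.
  by rewrite -(qclass_rank XQ xX x'X) -(qclass_rank YQ yY y'Y).
have x'Y : x' \in Y.
  by rewrite (qclass_eq YQ y'Y) inE r_sym (zigzag_rank_eq zz eq_x'y').
by rewrite (qclass_eq XQ x'X) (qclass_eq YQ x'Y).
Qed.

Lemma qle_cls x y : x <= y -> qle r (cls x) (cls y).
Proof. by move=> xy; exists x, y, [::]; rewrite !mem_cls. Qed.

Lemma qle_poset : is_poset_on (fun X => X \in Q) (qle r).
Proof.
split=> [X XQ | X Y XQ YQ XY YX | X Y Z XQ YQ ZQ].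
- by have [x xX] := qclass_n0 XQ; rewrite (qclass_eq XQ xX); apply: qle_cls.
- have [x xX] := qclass_n0 XQ; have [y yY] := qclass_n0 YQ.
  apply: (qle_rank_eq XQ YQ XY xX yY); apply/eqP.
  by rewrite eqn_leq (qle_rank XQ YQ XY) // (qle_rank YQ XQ YX).
- move=> [x [y [s [xX yY zz]]]] [y' [z [t [y'Y zZ zz']]]].
  have yy' : r y y' by move: y'Y; rewrite (qclass_eq YQ yY) inE.
  by exists x, z, (s ++ (y, y') :: t); rewrite (zigzag_cat zz (lexx y) yy' zz').
Qed.

Local Notation qcovers := (covers (fun X => X \in Q) (qle r)).

Lemma qcovers_cls x y : pcovers x y -> qcovers (cls x) (cls y).
Proof.
move=> xy; have rk_y := covers_rank xy.
have clsxQ := cls_in_qclasses x; have clsyQ := cls_in_qclasses y.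
rewrite /covers; split=> [|eq_cls|[Z [ZQ xZ Zx Zy Zy']]].
- exact/qle_cls/ltW/covers_lt.
- have yx : y \in cls x by rewrite eq_cls mem_cls.
  by have := qclass_rank clsxQ (mem_cls x) yx; rewrite rk_y => /n_Sn.
have [z zZ] := qclass_n0 ZQ.
have le_xz := qle_rank clsxQ ZQ xZ (mem_cls x) zZ.
have := qle_rank ZQ clsyQ Zy zZ (mem_cls y).
rewrite rk_y leq_eqVlt ltnS => /predU1P[eq_zy | le_zx].
  by apply: Zy'; apply: (qle_rank_eq ZQ clsyQ Zy zZ (mem_cls y)); rewrite rk_y.
apply: Zx; symmetry; apply: (qle_rank_eq clsxQ ZQ xZ (mem_cls x) zZ).
by apply/eqP; rewrite eqn_leq le_xz le_zx.
Qed.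

Lemma qcoversP X Y : X \in Q -> Y \in Q ->
  qcovers X Y <-> exists x y, [/\ x \in X, y \in Y & pcovers x y].
Proof.
move=> XQ YQ; split=> [[XY XNY noZ] | [x [y [xX yY xy]]]]; last first.
  by rewrite (qclass_eq XQ xX) (qclass_eq YQ yY); apply: qcovers_cls.
have [x [y [s [xX yY zz]]]] := XY.
have lt_xy : (rho x < rho y)%N.
  rewrite ltn_neqAle (zigzag_rank_le zz) andbT.
  by apply/eqP => /(qle_rank_eq XQ YQ XY xX yY)/XNY.
have [u [c [t [xu uc zz']]]] := zigzag_rank_lt zz lt_xy.
have uX : u \in X by rewrite (qclass_eq XQ xX) inE.
exists u, c; split=> //.
have [<- | cNY] := eqVneq (cls c) Y; first exact: mem_cls.
case: noZ; exists (cls c); split.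
- exact: cls_in_qclasses.
- by rewrite (qclass_eq XQ uX); apply/qle_cls/ltW/covers_lt.
- move=> eq_cX; have cX : c \in X by rewrite -eq_cX mem_cls.
  by have := qclass_rank XQ uX cX; rewrite (covers_rank uc) => /n_Sn.
- by exists c, y, t; rewrite mem_cls.
- exact/eqP.
Qed.

Definition qrank X : nat := if [pick x in X] is Some x then rho x else 0%N.

Lemma qrankE X x : X \in Q -> x \in X -> qrank X = rho x.
Proof.
move=> XQ xX; rewrite /qrank; case: pickP => [y yX | /(_ x)].
  exact: qclass_rank yX xX.
by rewrite xX.
Qed.

Lemma qrank_graded : graded_by (fun X => X \in Q) (qle r) qrank.
Proof.
split=> [X XQ Xmin | X Y XQ YQ /(qcoversP XQ YQ) [x [y [xX yY xy]]]].
  have [x xX] := qclass_n0 XQ; rewrite (qrankE XQ xX).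
  apply: rho_graded.1 => // y _ yx.
  have eq_cls : cls y = X.
    apply: Xmin; first exact: cls_in_qclasses.
    by rewrite (qclass_eq XQ xX); apply: qle_cls.
  have yX : y \in X by rewrite -eq_cls mem_cls.
  exact: rank_le_inj yx (qclass_rank XQ yX xX).
by rewrite (qrankE XQ xX) (qrankE YQ yY) (covers_rank xy).
Qed.

End Quotient.
End Graded.
End FinPOrder.

Theorem proposition3p15 (d : Order.disp_t) (P : finPOrderType d)
  (rho : P -> nat)
  (Hgraded : graded_by (fun _ => True) (fun x y : P => x <= y) rho)
  (r : rel P)
  (Hrefl : reflexive r) (Hsym : symmetric r) (Htrans : transitive r)
  (Hrank : forall x y, r x y -> rho x = rho y) :
  let Q := qclasses r in
  let inQ := fun X : {set P} => X \in Q in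
  (* (1) P/~ is a poset *)
  is_poset_on inQ (qle r) /\
  (* (2) covers in P/~ *)
  (forall X Y, X \in Q -> Y \in Q ->
     (covers inQ (qle r) X Y <->
      exists x y, [/\ x \in X, y \in Y &
                      covers (fun _ => True) (fun a b : P => a <= b) x y])) /\
  (* (3) P/~ is graded, with rank of a class = rank of any element *)
  (exists rhoQ : {set P} -> nat,
     graded_by inQ (qle r) rhoQ /\
     forall X x, X \in Q -> x \in X -> rhoQ X = rho x).
Proof.
move=> Q inQ.
split; first exact (qle_poset Hgraded Hrefl Hsym Htrans Hrank).
split; first exact (qcoversP Hgraded Hrefl Hsym Htrans Hrank).
exists (qrank rho); split; first exact (qrank_graded Hgraded Hrefl Hsym Htrans Hrank).
exact (qrankE Hsym Htrans Hrank).
Qed.
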